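(* Let $M\in\mathbb{R}^{m\times m}$ be symmetric with $k_{\underline m}I_m\le M\le k_{\overline m}I_m$ for constants $0<k_{\underline m}\le k_{\overline m}$ (with $k_{\underline m}<k_{\overline m}$ or equality allowed), let $C\in\mathbb{R}^{m\times m}$, $G\in\mathbb{R}^m$, $v\in\mathbb{R}^m$ satisfy $\|C\|\le k_c\|v\|$ and $\|G\|\le k_g$ for constants $k_c,k_g>0$. Set $\hat M=\frac{2}{k_{\underline m}^{-1}+k_{\overline m}^{-1}}I_m$, $\epsilon=\frac{k_{\underline m}^{-1}-k_{\overline m}^{-1}}{k_{\underline m}^{-1}+k_{\overline m}^{-1}}$, $f(v)=k_{\underline m}^{-1}(k_c\|v\|^2+k_g)$, $F=-M^{-1}(Cv+G)$. For arbitrary $\zeta,u_2\in\mathbb{R}^m$ and $\kappa\ge1$ define $$u_1=\begin{cases}-\frac{\kappa}{1-\epsilon}\frac{\zeta}{\|\zeta\|}\big(\epsilon\|u_2\|+f(v)\big),&\zeta\ne0,\\ 0,&\zeta=0,\end{cases}\qquad Z=u_1+(M^{-1}\hat M-I_m)(u_1+u_2)+F.$$ Then $\zeta^TZ\le0$.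
   Context: $\|\cdot\|$ denotes the Euclidean norm of vectors and the induced spectral norm of matrices. In the application, $M=M_i(q_i)$, $C=C_i(q_i,\dot q_i)$, $G=G_i(q_i)$, $v=\dot q_i$ are the inertia matrix, Coriolis/centrifugal matrix, gravity vector and velocity of an Euler–Lagrange system $M_i(q_i)\ddot q_i+C_i(q_i,\dot q_i)\dot q_i+G_i(q_i)=\tau_i$. *)

From HB Require Import structures.
From mathcomp Require Import all_boot all_order all_algebra.
From mathcomp Require Import boolp classical_sets reals.
Set Implicit Arguments. Unset Strict Implicit. Unset Printing Implicit Defensive.
Import Order.TTheory GRing.Theory Num.Theory.
Local Open Scope ring_scope.
Local Open Scope classical_set_scope.

Definition vnorm (R : realType) (n : nat) (x : 'cV[R]_n) : R :=
  Num.sqrt (\sum_(i < n) x i ord0 ^+ 2).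

Definition mnorm (R : realType) (p n : nat) (A : 'M[R]_(p, n)) : R :=
  sup [set vnorm (A *m x) | x in [set x : 'cV[R]_n | vnorm x <= 1]].

Definition qform (R : realType) (n : nat) (A : 'M[R]_n) (x : 'cV[R]_n) : R :=
  (x^T *m A *m x) ord0 ord0.

Definition loewner_le (R : realType) (n : nat) (A B : 'M[R]_n) : Prop :=
  forall x : 'cV[R]_n, qform A x <= qform B x.

From HB Require Import structures.
From mathcomp Require Import all_boot all_order all_algebra.
From mathcomp Require Import boolp classical_sets reals.
From mathcomp Require Import ring lra.
Import Order.TTheory GRing.Theory Num.Theory.
Local Open Scope ring_scope.

(* With A := M^-1, the bounds km <= M <= kM give kM^-1 <= A <= km^-1 in the
   Loewner order, so for the harmonic mean h of km and kM the matrix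
   A Mhat = h A lies between (1 - eps) I and (1 + eps) I.  Split
     zeta^T Z = zeta^T (A Mhat) u1 + zeta^T (A Mhat - I) u2 + zeta^T F.
   Since u1 points along -zeta, the first term is at most
   -kappa (eps |u2| + f) |zeta|; the symmetric matrix A Mhat - I has spectrum
   in [-eps, eps], so by polarization the second is at most eps |zeta| |u2|;
   and |A| <= km^-1 bounds the third by f |zeta|.  As kappa >= 1, the sum is
   nonpositive. *)

Set Implicit Arguments. Unset Strict Implicit. Unset Printing Implicit Defensive.

Section Dot.
Variables (R : realType) (n : nat).
Implicit Types (x y z : 'cV[R]_n) (A : 'M[R]_n).

Definition dot x y : R := \sum_(i < n) x i ord0 * y i ord0.

Lemma dotE x y : (x^T *m y) ord0 ord0 = dot x y.
Proof. by rewrite mxE; apply: eq_bigr => i _; rewrite mxE. Qed.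

Lemma dotC x y : dot x y = dot y x.
Proof. by apply: eq_bigr => i _; rewrite mulrC. Qed.

Lemma dotDr x y z : dot x (y + z) = dot x y + dot x z.
Proof. by rewrite /dot -big_split; apply: eq_bigr => i _; rewrite mxE mulrDr. Qed.

Lemma dotZr a x y : dot x (a *: y) = a * dot x y.
Proof. by rewrite /dot mulr_sumr; apply: eq_bigr => i _; rewrite mxE mulrCA. Qed.

Lemma dotNr x y : dot x (- y) = - dot x y.
Proof. by rewrite -scaleN1r dotZr mulN1r. Qed.

Lemma dotDl x y z : dot (x + y) z = dot x z + dot y z.
Proof. by rewrite dotC dotDr !(dotC z). Qed.

Lemma dotZl a x y : dot (a *: x) y = a * dot x y.
Proof. by rewrite dotC dotZr dotC. Qed.

Lemma dot0l x : dot 0 x = 0.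
Proof. by rewrite /dot big1 // => i _; rewrite mxE mul0r. Qed.

Lemma dot_ge0 x : 0 <= dot x x.
Proof. by apply: sumr_ge0 => i _; rewrite -expr2 sqr_ge0. Qed.

Lemma dot_eq0 x : (dot x x == 0) = (x == 0).
Proof.
apply/idP/eqP => [|->]; last by rewrite dot0l.
rewrite psumr_eq0 => [/allP x0|i _]; last by rewrite -expr2 sqr_ge0.
apply/matrixP => i j; rewrite (ord1 j) mxE.
by have /= := x0 i (mem_index_enum i); rewrite mulf_eq0 orbb => /eqP.
Qed.

Lemma dot_mulmx_sym A x y : A^T = A -> dot x (A *m y) = dot y (A *m x).
Proof.
move=> AT; have trmx11 (B : 'M[R]_1) : B ord0 ord0 = B^T ord0 ord0 by rewrite mxE.
by rewrite -!dotE trmx11 !trmx_mul AT trmxK mulmxA.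
Qed.

Lemma dot_scalar_mx a x : dot x (a%:M *m x) = a * dot x x.
Proof. by rewrite mul_scalar_mx dotZr. Qed.

Lemma qformE A x : qform A x = dot x (A *m x).
Proof. by rewrite /qform -mulmxA dotE. Qed.

Lemma discriminant_le (a b c : R) : 0 <= a ->
  (forall t, 0 <= a * t ^+ 2 + 2 * b * t + c) -> b ^+ 2 <= a * c.
Proof.
move=> a_ge0 nonneg; have [a_gt0|] := ltrP 0 a.
  have := nonneg (- b / a).
  have -> : a * (- b / a) ^+ 2 + 2 * b * (- b / a) + c = c - b ^+ 2 / a.
    by field; rewrite gt_eqF.
  by rewrite subr_ge0 ler_pdivrMr // mulrC.
rewrite le_eqVlt ltNge a_ge0 orbF => /eqP a0; subst a; rewrite mul0r.
have [->|b_neq0] := eqVneq b 0; first by rewrite expr0n.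
have := nonneg (- (c + 1) / (2 * b)).
have -> : 0 * (- (c + 1) / (2 * b)) ^+ 2 + 2 * b * (- (c + 1) / (2 * b)) + c = -1.
  by field.
by rewrite ler0N1.
Qed.

Lemma psd_cauchy_schwarz A x y : A^T = A -> (forall z, 0 <= dot z (A *m z)) ->
  dot x (A *m y) ^+ 2 <= dot x (A *m x) * dot y (A *m y).
Proof.
move=> AT psd; apply: discriminant_le => // t.
have := psd (t *: x + y).
rewrite mulmxDr -scalemxAr dotDl !dotDr !dotZl !dotZr (dot_mulmx_sym y x AT).
by move=> h; lra.
Qed.

Lemma cauchy_schwarz x y : dot x y ^+ 2 <= dot x x * dot y y.
Proof.
have := @psd_cauchy_schwarz 1%:M x y (trmx1 _ _).
by rewrite !mul1mx; apply => z; rewrite mul1mx dot_ge0.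
Qed.

Lemma vnorm_ge0 x : 0 <= vnorm x.
Proof. exact: sqrtr_ge0. Qed.

Lemma vnorm_sq x : vnorm x ^+ 2 = dot x x.
Proof.
rewrite sqr_sqrtr; last exact: dot_ge0.
by apply: eq_bigr => i _; rewrite expr2.
Qed.

Lemma ler_vnorm x b : 0 <= b -> (vnorm x <= b) = (dot x x <= b ^+ 2).
Proof. by move=> b0; rewrite -vnorm_sq ler_pXn2r // nnegrE vnorm_ge0. Qed.

Lemma vnorm_eq0 x : (vnorm x == 0) = (x == 0).
Proof. by rewrite -sqrf_eq0 vnorm_sq dot_eq0. Qed.

Lemma vnorm0 : vnorm (0 : 'cV[R]_n) = 0.
Proof. by apply/eqP; rewrite vnorm_eq0. Qed.

Lemma vnormZ a x : vnorm (a *: x) = `|a| * vnorm x.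
Proof.
apply/eqP; rewrite -(eqrXn2 (n := 2)) ?mulr_ge0 ?vnorm_ge0 //.
by rewrite exprMn !vnorm_sq dotZr dotC dotZr mulrA -expr2 real_normK ?num_real.
Qed.

Lemma normr_dot_le x y : `|dot x y| <= vnorm x * vnorm y.
Proof.
rewrite -ler_sqr ?nnegrE ?mulr_ge0 ?vnorm_ge0 //.
by rewrite real_normK ?num_real // exprMn !vnorm_sq cauchy_schwarz.
Qed.

Lemma vnormD x y : vnorm (x + y) <= vnorm x + vnorm y.
Proof.
rewrite ler_vnorm ?addr_ge0 ?vnorm_ge0 // dotDl !dotDr (dotC y x) -!vnorm_sq.
have := ler_norm (dot x y); have := normr_dot_le x y; lra.
Qed.

End Dot.

Section OperatorNorm.
Variables (R : realType) (p n : nat).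
Local Open Scope classical_set_scope.

Lemma normr_coord_le (x : 'cV[R]_n) j : `|x j ord0| <= vnorm x.
Proof.
rewrite /vnorm -sqrtr_sqr ler_sqrt ?sumr_ge0 // => [|i _]; last exact: sqr_ge0.
rewrite (bigD1 j) //= lerDl.
by apply: sumr_ge0 => i _; rewrite sqr_ge0.
Qed.

Lemma vnorm_mulmx_bounded (C : 'M[R]_(p, n)) :
  exists2 K, 0 <= K & forall x, vnorm (C *m x) <= K * vnorm x.
Proof.
pose row_sum i := \sum_(j < n) `|C i j|.
exists (Num.sqrt (\sum_(i < p) row_sum i ^+ 2)) => [|x]; first exact: sqrtr_ge0.
rewrite ler_vnorm ?mulr_ge0 ?sqrtr_ge0 ?vnorm_ge0 //.
rewrite exprMn sqr_sqrtr ?sumr_ge0 // => [|i _]; last exact: sqr_ge0.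
rewrite mulr_suml; apply: ler_sum => i _; rewrite -exprMn -expr2.
have coord_le : `|(C *m x) i ord0| <= row_sum i * vnorm x.
  rewrite mxE mulr_suml; apply: le_trans (ler_norm_sum _ _ _) _.
  by apply: ler_sum => j _; rewrite normrM ler_wpM2l ?normr_coord_le.
rewrite -real_normK ?num_real // ler_pXn2r ?nnegrE //.
by rewrite mulr_ge0 ?vnorm_ge0 ?sumr_ge0.
Qed.

Lemma vnorm_mulmx_le (C : 'M[R]_(p, n)) x : vnorm (C *m x) <= mnorm C * vnorm x.
Proof.
set E := [set vnorm (C *m y) | y in [set y : 'cV[R]_n | vnorm y <= 1]].
have [K K_ge0 CK] := vnorm_mulmx_bounded C.
have supE : has_sup E.
  split; first by exists (vnorm (C *m 0)), 0; rewrite //= vnorm0 ler01.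
  exists K => _ [y /= y_le1 <-].
  by apply: le_trans (CK y) _; rewrite ler_piMr.
have [->|x_neq0] := eqVneq x 0; first by rewrite mulmx0 !vnorm0 mulr0.
have x_gt0 : 0 < vnorm x by rewrite lt_def vnorm_eq0 x_neq0 vnorm_ge0.
rewrite -ler_pdivrMr // mulrC -[(vnorm x)^-1]ger0_norm ?invr_ge0 ?vnorm_ge0 //.
rewrite -vnormZ scalemxAr; apply: sup_upper_bound => //.
exists ((vnorm x)^-1 *: x) => //=.
by rewrite vnormZ ger0_norm ?invr_ge0 ?vnorm_ge0 // mulVf ?gt_eqF.
Qed.

Lemma vnorm_mulmxD_le (C : 'M[R]_(p, n)) v (G : 'cV[R]_p) (k c : R) :
  mnorm C <= k * vnorm v -> vnorm G <= c -> vnorm (C *m v + G) <= k * vnorm v ^+ 2 + c.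
Proof.
move=> C_le G_le; apply: le_trans (vnormD _ _) (lerD _ G_le).
by apply: le_trans (vnorm_mulmx_le _ _) _; rewrite expr2 mulrA ler_wpM2r ?vnorm_ge0.
Qed.

End OperatorNorm.

Section SymmetricForm.
Variables (R : realType) (n : nat).
Implicit Types (x y z : 'cV[R]_n) (S : 'M[R]_n).

Lemma dot_polarization S x y : S^T = S ->
  4 * dot x (S *m y) = dot (x + y) (S *m (x + y)) - dot (x - y) (S *m (x - y)).
Proof.
move=> ST; rewrite !mulmxDr !mulmxN !dotDl !dotDr !dotNr.
rewrite -scaleN1r !dotZl (dot_mulmx_sym y x ST); ring.
Qed.

Lemma dot_sym_le S (e : R) x y : S^T = S ->
    (forall z, `|dot z (S *m z)| <= e * dot z z) ->
  dot x (S *m y) <= e * vnorm x * vnorm y.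
Proof.
move=> ST Sbound.
have polarized_le u w : 4 * dot u (S *m w) <= 2 * e * (dot u u + dot w w).
  rewrite dot_polarization //.
  have /ler_normlP[_ le_sum] := Sbound (u + w).
  have /ler_normlP[le_diff _] := Sbound (u - w).
  move: le_sum le_diff; rewrite !dotDl !dotDr -scaleN1r !dotZl !dotZr dotC.
  by rewrite (dotC w u) => ? ?; lra.
have [->|x_neq0] := eqVneq x 0; first by rewrite dot0l vnorm0 mulr0 mul0r.
have [->|y_neq0] := eqVneq y 0.
  by rewrite mulmx0 dotC dot0l vnorm0 mulr0.
have xy_gt0 : 0 < vnorm x * vnorm y.
  by rewrite mulr_gt0 // lt_def vnorm_eq0 ?x_neq0 ?y_neq0 vnorm_ge0.
(* For |y| x and |x| y both squared norms on the right of [polarized_le] equal |x|^2 |y|^2. *)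
have := polarized_le (vnorm y *: x) (vnorm x *: y).
rewrite -scalemxAr !dotZl !dotZr -!vnorm_sq => le_scaled.
by rewrite -(ler_pM2l xy_gt0); lra.
Qed.

End SymmetricForm.

Section HarmonicMean.
Variable R : realFieldType.
Implicit Types a b : R.

Definition harmonic_mean a b := 2 / (a^-1 + b^-1).

Definition spread_ratio a b := (a^-1 - b^-1) / (a^-1 + b^-1).

Lemma harmonic_mean_gt0 a b : 0 < a -> 0 < b -> 0 < harmonic_mean a b.
Proof. by move=> a_gt0 b_gt0; rewrite divr_gt0 // addr_gt0 ?invr_gt0. Qed.

Lemma harmonic_mean_mulVl a b : 0 < a -> 0 < b ->
  harmonic_mean a b * a^-1 = 1 + spread_ratio a b.
Proof.
move=> a_gt0 b_gt0; rewrite /harmonic_mean /spread_ratio.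
by field; rewrite !gt_eqF ?addr_gt0.
Qed.

Lemma harmonic_mean_mulVr a b : 0 < a -> 0 < b ->
  harmonic_mean a b * b^-1 = 1 - spread_ratio a b.
Proof.
move=> a_gt0 b_gt0; rewrite /harmonic_mean /spread_ratio.
by field; rewrite !gt_eqF ?addr_gt0.
Qed.

Lemma spread_ratio_ge0 a b : 0 < a -> a <= b -> 0 <= spread_ratio a b.
Proof.
move=> a_gt0 le_ab; have b_gt0 := lt_le_trans a_gt0 le_ab.
by rewrite divr_ge0 ?subr_ge0 ?lef_pV2 ?posrE // addr_ge0 // invr_ge0 ltW.
Qed.

Lemma spread_ratio_lt1 a b : 0 < a -> 0 < b -> spread_ratio a b < 1.
Proof.
move=> a_gt0 b_gt0; rewrite -subr_gt0 -harmonic_mean_mulVr //.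
by rewrite mulr_gt0 ?harmonic_mean_gt0 ?invr_gt0.
Qed.

End HarmonicMean.

Section CoerciveInverse.
Variables (R : realType) (n : nat) (M : 'M[R]_n) (km kM : R).
Hypotheses (MT : M^T = M) (km_gt0 : 0 < km).
Implicit Types x y z : 'cV[R]_n.
Hypothesis M_ge : forall x, km * dot x x <= dot x (M *m x).

Lemma coercive_unitmx : M \in unitmx.
Proof.
rewrite unitmxE unitfE; apply/det0P => -[w w_neq0 wM].
have Mw : M *m w^T = 0 by rewrite -MT -trmx_mul wM trmx0.
have := M_ge w^T; rewrite Mw dotC dot0l pmulr_rle0 // => dot_le0.
have : dot w^T w^T == 0 by rewrite eq_le dot_le0 dot_ge0.
by rewrite dot_eq0 -trmx0 (inj_eq trmx_inj) (negPf w_neq0).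
Qed.

Lemma vnorm_invmx_le x : vnorm (invmx M *m x) <= km^-1 * vnorm x.
Proof.
set y := invmx M *m x.
have y_le : km * vnorm y ^+ 2 <= vnorm y * vnorm x.
  rewrite vnorm_sq; apply: le_trans (M_ge y) _.
  by rewrite (mulKVmx coercive_unitmx) dotC mulrC (le_trans (ler_norm _)) ?normr_dot_le.
have [y0|y_gt0] := eqVneq (vnorm y) 0.
  by rewrite y0 mulr_ge0 ?invr_ge0 ?vnorm_ge0 ?ltW.
have {}y_gt0 : 0 < vnorm y by rewrite lt_def y_gt0 vnorm_ge0.
rewrite -(ler_pM2l km_gt0) mulrA mulfV ?gt_eqF // mul1r -(ler_pM2r y_gt0).
by rewrite -mulrA -expr2 [X in _ <= X]mulrC.
Qed.

Lemma dot_invmx_le x : dot x (invmx M *m x) <= km^-1 * dot x x.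
Proof.
apply: le_trans (ler_norm _) (le_trans (normr_dot_le _ _) _).
rewrite -vnorm_sq expr2 mulrCA ler_wpM2l ?vnorm_ge0 //; exact: vnorm_invmx_le.
Qed.

Hypotheses (km_le_kM : km <= kM) (M_le : forall x, dot x (M *m x) <= kM * dot x x).

Lemma dot_invmx_ge x : kM^-1 * dot x x <= dot x (invmx M *m x).
Proof.
have kM_gt0 : 0 < kM := lt_le_trans km_gt0 km_le_kM.
set y := invmx M *m x; set s := dot x x; set q := dot x y.
have q_def : q = dot y (M *m y) by rewrite (mulKVmx coercive_unitmx) dotC.
have q_ge0 : 0 <= q.
  by rewrite q_def (le_trans _ (M_ge y)) // mulr_ge0 ?dot_ge0 ?ltW.
have M_psd z : 0 <= dot z (M *m z).
  by apply: le_trans (M_ge z); rewrite mulr_ge0 ?dot_ge0 ?ltW.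
have s_sq : s ^+ 2 <= q * (kM * s).
  have s_def : s = dot y (M *m x).
    by rewrite /s -{2}[x](mulKVmx coercive_unitmx) dot_mulmx_sym.
  rewrite {1}s_def q_def; apply: le_trans (psd_cauchy_schwarz _ _ MT M_psd) _.
  by rewrite ler_wpM2l ?M_psd ?M_le.
rewrite -(ler_pM2l kM_gt0) mulrA mulfV ?gt_eqF // mul1r.
have [s0|s_gt0] := eqVneq s 0; first by rewrite s0 mulr_ge0 // ltW.
have {}s_gt0 : 0 < s by rewrite lt_def s_gt0 dot_ge0.
by rewrite -(ler_pM2r s_gt0) -expr2; lra.
Qed.

Lemma dot_invmx_harmonic_ge x :
  (1 - spread_ratio km kM) * dot x x
    <= dot x (invmx M *m (harmonic_mean km kM)%:M *m x).
Proof.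
have kM_gt0 : 0 < kM := lt_le_trans km_gt0 km_le_kM.
rewrite -mulmxA mul_scalar_mx -scalemxAr dotZr -harmonic_mean_mulVr // -mulrA.
by rewrite ler_wpM2l ?dot_invmx_ge // ltW ?harmonic_mean_gt0.
Qed.

Lemma dot_invmx_harmonic_sub1_le x y :
  dot x ((invmx M *m (harmonic_mean km kM)%:M - 1%:M) *m y)
    <= spread_ratio km kM * vnorm x * vnorm y.
Proof.
have kM_gt0 : 0 < kM := lt_le_trans km_gt0 km_le_kM.
have h_ge0 := ltW (harmonic_mean_gt0 km_gt0 kM_gt0).
rewrite mul_mx_scalar; apply: dot_sym_le => [|z].
  by rewrite raddfB /= trmx1 linearZ /= trmx_inv MT.
rewrite mulmxBl mul1mx dotDr dotNr -scalemxAl dotZr.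
have := ler_wpM2l h_ge0 (dot_invmx_ge z); have := ler_wpM2l h_ge0 (dot_invmx_le z).
rewrite !mulrA harmonic_mean_mulVr ?harmonic_mean_mulVl // => ? ?.
by apply/ler_normlP; split; lra.
Qed.

End CoerciveInverse.

Unset Implicit Arguments. Set Strict Implicit.

Theorem lemma6 (R : realType) (m : nat)
    (M C : 'M[R]_m) (G v zeta u2 : 'cV[R]_m)
    (km kM kc kg kappa : R) :
  0 < km -> km <= kM -> 0 < kc -> 0 < kg -> 1 <= kappa ->
  M^T = M ->
  loewner_le (km%:M) M -> loewner_le M (kM%:M) ->
  mnorm C <= kc * vnorm v ->
  vnorm G <= kg ->
  let Mhat : 'M[R]_m := (2 / (km^-1 + kM^-1))%:M in
  let eps : R := (km^-1 - kM^-1) / (km^-1 + kM^-1) in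
  let f : R := km^-1 * (kc * vnorm v ^+ 2 + kg) in
  let F : 'cV[R]_m := - (invmx M *m (C *m v + G)) in
  let u1 : 'cV[R]_m :=
    if zeta == 0 then 0
    else (- (kappa / (1 - eps) * (eps * vnorm u2 + f) / vnorm zeta)) *: zeta in
  let Z : 'cV[R]_m := u1 + (invmx M *m Mhat - 1%:M) *m (u1 + u2) + F in
  (zeta^T *m Z) ord0 ord0 <= 0.
Proof.
move=> km_gt0 km_le_kM kc_gt0 kg_gt0 kappa_ge1 MT M_ge M_le C_le G_le.
cbv zeta; set Mhat := (2 / _)%:M; set eps := (km^-1 - kM^-1) / _.
set f := km^-1 * _; set F := - (invmx M *m _).
set u1 := if zeta == 0 then _ else _; set Z := u1 + _ + F.
have {}M_ge x : km * dot x x <= dot x (M *m x) by rewrite -dot_scalar_mx -!qformE.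
have {}M_le x : dot x (M *m x) <= kM * dot x x by rewrite -dot_scalar_mx -!qformE.
have eps_ge0 : 0 <= eps := spread_ratio_ge0 km_gt0 km_le_kM.
have eps_lt1 : 0 < 1 - eps.
  by rewrite subr_gt0; exact: spread_ratio_lt1 km_gt0 (lt_le_trans km_gt0 km_le_kM).
have f_ge0 : 0 <= f.
  apply: mulr_ge0; first by rewrite invr_ge0 ltW.
  by apply: addr_ge0; [apply: mulr_ge0; [exact: ltW | exact: sqr_ge0] | exact: ltW].
rewrite dotE; have [->|zeta_neq0] := eqVneq zeta 0; first by rewrite dot0l.
have zeta_gt0 : 0 < vnorm zeta by rewrite lt_def vnorm_eq0 zeta_neq0 vnorm_ge0.
have kappa_ge0 : 0 <= kappa := le_trans ler01 kappa_ge1.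
have g_ge0 : 0 <= eps * vnorm u2 + f := addr_ge0 (mulr_ge0 eps_ge0 (vnorm_ge0 _)) f_ge0.
have u1_term : dot zeta (invmx M *m Mhat *m u1)
    <= - (kappa * (eps * vnorm u2 + f) * vnorm zeta).
  rewrite /u1 (negPf zeta_neq0) -scalemxAr dotZr mulNr lerN2.
  have Mhat_ge x : (1 - eps) * dot x x <= dot x (invmx M *m Mhat *m x) :=
    dot_invmx_harmonic_ge MT km_gt0 M_ge km_le_kM M_le x.
  apply: le_trans (ler_wpM2l _ (Mhat_ge zeta)).
    rewrite -vnorm_sq le_eqVlt; apply/orP; left; apply/eqP.
    by field; rewrite !gt_eqF.
  exact: divr_ge0 (mulr_ge0 (divr_ge0 kappa_ge0 (ltW eps_lt1)) g_ge0) (vnorm_ge0 _).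
have u2_term : dot zeta ((invmx M *m Mhat - 1%:M) *m u2)
    <= eps * vnorm zeta * vnorm u2 :=
  dot_invmx_harmonic_sub1_le MT km_gt0 M_ge km_le_kM M_le zeta u2.
have F_term : dot zeta F <= f * vnorm zeta.
  rewrite /F dotNr lerNl; apply: lerNnormlW; apply: le_trans (normr_dot_le _ _) _.
  rewrite [f * _]mulrC ler_wpM2l ?vnorm_ge0 //.
  apply: le_trans (vnorm_invmx_le MT km_gt0 M_ge _) _.
  by rewrite ler_wpM2l ?invr_ge0 ?(ltW km_gt0) ?vnorm_mulmxD_le.
have -> : dot zeta Z = dot zeta (invmx M *m Mhat *m u1)
    + dot zeta ((invmx M *m Mhat - 1%:M) *m u2) + dot zeta F.
  by rewrite /Z mulmxDr addrA mulmxBl mul1mx (addrC u1) subrK !dotDr.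
have : 0 <= (kappa - 1) * ((eps * vnorm u2 + f) * vnorm zeta).
  by rewrite mulr_ge0 ?subr_ge0 // mulr_ge0 ?vnorm_ge0.
lra.
Qed.
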